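(* Let $(X,\ast,u,d)$ be a finite block GL-rack and $c$ the size of each of its blocks. Then for every oriented Legendrian knot $K$, $\operatorname{Col}_X(K)$ is divisible by $c$.
   Context: A rack is a set $X$ with a binary operation $\ast$ such that for every $y\in X$ the map $x\mapsto x\ast y$ is a bijection of $X$ and $(x\ast y)\ast z=(x\ast z)\ast(y\ast z)$ for all $x,y,z$. A GL-rack is a quadruple $(X,\ast,u,d)$ where $(X,\ast)$ is a rack and $u,d\colon X\to X$ are maps such that for all $x,y\in X$: $u(d(x\ast x))=d(u(x\ast x))=x$; $u(x\ast y)=u(x)\ast y$ and $d(x\ast y)=d(x)\ast y$; $x\ast u(y)=x\ast d(y)=x\ast y$. The diagonal map is $\Delta(x)=x\ast x$; for finite $X$ it is a bijection with $\Delta=(u\circ d)^{-1}$. A finite GL-rack is a block GL-rack if all cycles in the disjoint cycle decomposition of $\Delta$ (fixed points counted as $1$-cycles) have the same length $c$; the supports of these cycles are the blocks. Legendrian knots in $(\mathbb{R}^3,\xi_{\mathrm{std}})$ are represented by oriented front diagrams. Given a finite GL-rack $X$ and a front diagram $D$ of $K$, a coloring is an assignment of elements of $X$ to the semi-arcs of $D$ (segments bounded by undercrossings or cusps) such that, following the orientation through a cusp, the color changes from $x$ to $u(x)$ if the cusp is traversed upward and to $d(x)$ if traversed downward; and at each crossing whose over-strand is colored $y$, if the under semi-arc on the right of the oriented over-strand is colored $x$, the one on its left is colored $x\ast y$. $\operatorname{Col}_X(K)$ is the number of colorings (a Legendrian isotopy invariant, equal to $|\operatorname{Hom}(\operatorname{GLR}(K),X)|$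 for the fundamental GL-rack $\operatorname{GLR}(K)$). *)

From HB Require Import structures.
From mathcomp Require Import all_boot.
Set Implicit Arguments. Unset Strict Implicit. Unset Printing Implicit Defensive.

Definition is_rack (X : Type) (op : X -> X -> X) : Prop :=
  (forall y : X, bijective (fun x => op x y)) /\
  (forall x y z : X, op (op x y) z = op (op x z) (op y z)).

Definition is_GLrack (X : Type) (op : X -> X -> X) (u d : X -> X) : Prop :=
  [/\ is_rack op,
      (forall x, u (d (op x x)) = x /\ d (u (op x x)) = x),
      (forall x y, u (op x y) = op (u x) y /\ d (op x y) = op (d x) y) &
      (forall x y, op x (u y) = op x y /\ op x (d y) = op x y)].

Definition diag (X : Type) (op : X -> X -> X) : X -> X := fun x => op x x.

(* A finite GL-rack is a block GL-rack with blocks of size c when every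
   cycle of Delta has length c ([order f x] is the size of the f-orbit
   of x, see fingraph.v). *)
Definition block_GLrack_of_size (X : finType) (op : X -> X -> X) (c : nat) : Prop :=
  forall x : X, order (diag op) x = c.

(* Front diagrams, encoded by their left-to-right (Morse) slicing.    *)
(* Strands in a vertical slice are numbered 0,1,... from bottom (small *)
(* z) to top.  An event is                                            *)
(*   LCusp i : a left cusp creating two new strands at positions i,i+1 *)
(*   RCusp i : a right cusp joining the strands at positions i,i+1     *)
(*   Cross i : the strands at positions i, i+1 cross.                  *)

Inductive event := LCusp of nat | RCusp of nat | Cross of nat.

Definition step_strands (n : nat) (e : event) : nat :=
  match e with LCusp _ => n.+2 | RCusp _ => n - 2 | Cross _ => n end.

Fixpoint valid_from (n : nat) (w : seq event) : bool :=
  match w with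
  | [::] => n == 0
  | e :: w' =>
      match e with
      | LCusp i => (i <= n) && valid_from n.+2 w'
      | RCusp i => (i.+1 < n) && valid_from (n - 2) w'
      | Cross i => (i.+1 < n) && valid_from n w'
      end
  end.

Definition valid_front (w : seq event) : bool := valid_from 0 w.

(* number of strands in slice k (between event k-1 and event k) *)
Definition nstr (w : seq event) (k : nat) : nat := foldl step_strands 0 (take k w).

Definition evt (w : seq event) (k : nat) : event := nth (Cross 0) w k.

Definition is_lcusp w k i := if evt w k is LCusp i' then i' == i else false.
Definition is_rcusp w k i := if evt w k is RCusp i' then i' == i else false.
Definition is_cross w k i := if evt w k is Cross i' then i' == i else false.

(* strand position j in slice k continues to position j' in slice k+1
   without being involved in event k *)
Definition pass (w : seq event) (k j j' : nat) : bool :=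
  match evt w k with
  | Cross i => [&& j != i, j != i.+1 & j' == j]
  | LCusp i => if j < i then j' == j else j' == j.+2
  | RCusp i => ((j < i) && (j' == j)) || ((i.+1 < j) && (j'.+2 == j))
  end.

(* edges: the piece of strand j in slice k, for j < nstr w k.
   (nstr w k <= 2 * size w, so the bound on j loses nothing.) *)
Definition edge (w : seq event) :=
  {p : 'I_(size w).+1 * 'I_((size w).*2.+1) | (p.2 < nstr w p.1)%N}.

Definition ek (w : seq event) (e : edge w) : nat := (val e).1.
Definition ej (w : seq event) (e : edge w) : nat := (val e).2.

(* Crossing convention: at a crossing of the strands at positions i,i+1
   the strand of smaller slope, i.e. the one coming from position i+1
   and leaving at position i, is the over-strand. *)

(* e1 -> e2 are consecutive pieces of the same strand of the diagram *)
Definition next_piece (w : seq event) (e1 e2 : edge w) : bool :=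
  (ek e2 == (ek e1).+1) &&
  [|| pass w (ek e1) (ej e1) (ej e2),
      is_cross w (ek e1) (ej e2) && (ej e1 == (ej e2).+1)   (* over  *)
    | is_cross w (ek e1) (ej e1) && (ej e2 == (ej e1).+1) ]. (* under *)

(* e1, e2 are joined through a cusp (e1 the lower, e2 the upper piece) *)
Definition cusp_pair (w : seq event) (e1 e2 : edge w) : bool :=
  (ek e2 == ek e1) && (ej e2 == (ej e1).+1) &&
  ((0 < ek e1) && is_lcusp w (ek e1).-1 (ej e1) || is_rcusp w (ek e1) (ej e1)).

Definition adj (w : seq event) : rel (edge w) :=
  fun e1 e2 => [|| next_piece e1 e2, next_piece e2 e1, cusp_pair e1 e2 | cusp_pair e2 e1].

Definition is_knot_front (w : seq event) : bool :=
  valid_front w && (0 < #|{: edge w}|) && [forall e1, forall e2, connect (@adj w) e1 e2].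

(* orientations: o e = true iff the piece e is oriented left-to-right *)
Definition orientation (w : seq event) (o : edge w -> bool) : bool :=
  [forall e1, forall e2,
     (next_piece e1 e2 ==> (o e1 == o e2)) &&
     (cusp_pair e1 e2 ==> (o e1 != o e2))].

(* Colors are put on the pieces of strands; they must be constant along *)
(* semi-arcs, which is the same as coloring the semi-arcs.             *)

Definition coloring (X : finType) (op : X -> X -> X) (u d : X -> X)
  (w : seq event) (o : edge w -> bool) (f : {ffun edge w -> X}) : bool :=
  [forall e1, forall e2,
    (* no change along a strand not passing under a crossing *)
    ((ek e2 == (ek e1).+1) &&
      (pass w (ek e1) (ej e1) (ej e2) ||
       is_cross w (ek e1) (ej e2) && (ej e1 == (ej e2).+1))
       ==> (f e1 == f e2)) &&
    (* cusps: f upper = u (f lower) when traversed upward,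
              f lower = d (f upper) when traversed downward *)
    ((ek e2 == ek e1) && (ej e2 == (ej e1).+1) &&
       (0 < ek e1) && is_lcusp w (ek e1).-1 (ej e1)
       ==> (if o e1 then f e1 == d (f e2) else f e2 == u (f e1))) &&
    ((ek e2 == ek e1) && (ej e2 == (ej e1).+1) && is_rcusp w (ek e1) (ej e1)
       ==> (if o e1 then f e2 == u (f e1) else f e1 == d (f e2)))] &&
  (* crossings: e1 = under piece on the left, e2 = under piece on the
     right, e3 = incoming piece of the over strand (color y).  If the
     over strand goes right (down-right), e1 lies on its right side. *)
  [forall e1, forall e2, forall e3,
    [&& ek e2 == (ek e1).+1, ek e3 == ek e1, is_cross w (ek e1) (ej e1),
        ej e2 == (ej e1).+1 & ej e3 == (ej e1).+1]
    ==> (if o e3 then f e2 == op (f e1) (f e3) else f e1 == op (f e2) (f e3))].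

Definition Col (X : finType) (op : X -> X -> X) (u d : X -> X)
  (w : seq event) (o : edge w -> bool) : nat :=
  #|[set f : {ffun edge w -> X} | coloring op u d o f]|.

From mathcomp Require Import all_boot.

Set Implicit Arguments.
Unset Strict Implicit.
Unset Printing Implicit Defensive.

(* The diagonal map Delta of a GL-rack is an injective endomorphism of the
   whole GL-rack structure: it preserves the operation and commutes with u
   and d.  Composing a coloring with Delta therefore gives a coloring, so
   Delta permutes the finite set of colorings.  The orbit of a coloring has
   the lcm of the cycle lengths of its colors as its length, which is c as
   soon as the diagram has a semi-arc; hence the colorings split into orbits
   of size c. *)

Section Orbits.
Variables (T : finType) (f : T -> T).

Lemma order_le_iter x n : 0 < n -> iter n f x = x -> order f x <= n.
Proof.
move=> n_gt0 fnx; rewrite leqNgt; apply/negP => lt_n_order.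
have := findex_iter lt_n_order; rewrite fnx findex0 => n0.
by rewrite -n0 in n_gt0.
Qed.

Hypothesis injf : injective f.

Lemma fclosed_homo (A : {pred T}) : {homo f : x / x \in A} -> fclosed f A.
Proof.
move=> fA x _ /eqP <-; apply/idP/idP => [/fA // | fxA].
by rewrite -(finv_f injf x); apply: finv_in.
Qed.

Lemma uniform_order_dvdn_card c (A : {pred T}) :
  fclosed f A -> {in A, forall x, order f x = c} -> c %| #|A|.
Proof.
move=> clA ordA; rewrite -(fcard_order_set injf (n := c)) ?dvdn_mull //.
by apply/subsetP => x /ordA; rewrite inE => ->.
Qed.

End Orbits.

Definition ffun_map (E : finType) (T U : Type) (f : T -> U)
  (g : {ffun E -> T}) : {ffun E -> U} := [ffun e => f (g e)].

Section PointwiseOrbits.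
Variables (E T : finType) (f : T -> T).
Hypothesis injf : injective f.

Lemma ffun_map_inj : injective (@ffun_map E _ _ f).
Proof.
move=> g h /ffunP gh; apply/ffunP => e; apply: injf.
by have := gh e; rewrite !ffunE.
Qed.

Lemma iter_ffun_map n (g : {ffun E -> T}) :
  iter n (ffun_map f) g = [ffun e => iter n f (g e)].
Proof.
elim: n => [|n IHn] /=; apply/ffunP => e; rewrite !ffunE //.
by rewrite IHn ffunE.
Qed.

Lemma order_ffun_map c (e0 : E) :
  (forall x, order f x = c) ->
  forall g : {ffun E -> T}, order (ffun_map f) g = c.
Proof.
move=> order_c g; apply/eqP; rewrite eqn_leq; apply/andP; split.
- apply: order_le_iter; first by rewrite -(order_c (g e0)) order_gt0.
  rewrite iter_ffun_map; apply/ffunP => e.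
  by rewrite ffunE -{1}(order_c (g e)) iter_order.
- rewrite -(order_c (g e0)); apply: order_le_iter; first exact: order_gt0.
  have := iter_order ffun_map_inj g.
  by rewrite iter_ffun_map => /ffunP /(_ e0); rewrite ffunE.
Qed.

End PointwiseOrbits.

Section Racks.
Variables (X : Type) (op : X -> X -> X).
Hypothesis rackX : is_rack op.

Lemma op_diagr x y : op x (diag op y) = op x y.
Proof.
case: rackX => /(_ y) [inv_y _ inv_yK] distr.
by rewrite -(inv_yK x) /diag -distr.
Qed.

Lemma diag_op x y : diag op (op x y) = op (diag op x) (diag op y).
Proof. by case: rackX => _ distr; rewrite op_diagr /diag -distr. Qed.

End Racks.

Section GLRacks.
Variables (X : Type) (op : X -> X -> X) (u d : X -> X).
Hypothesis glX : is_GLrack op u d.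

Lemma diag_inj : injective (diag op).
Proof.
case: glX => _ udK _ _; apply: (can_inj (g := u \o d)) => x /=.
by case: (udK x).
Qed.

Lemma diag_u x : diag op (u x) = u (diag op x).
Proof.
case: glX => _ _ u_op op_u.
by rewrite /diag (proj1 (u_op x x)) (proj1 (op_u _ _)).
Qed.

Lemma diag_d x : diag op (d x) = d (diag op x).
Proof.
case: glX => _ _ d_op op_d.
by rewrite /diag (proj2 (d_op x x)) (proj2 (op_d _ _)).
Qed.

End GLRacks.

Section ColoringMorphism.
Variables (X Y : finType) (opX : X -> X -> X) (uX dX : X -> X).
Variables (opY : Y -> Y -> Y) (uY dY : Y -> Y) (h : X -> Y).
Hypothesis h_op : {morph h : x y / opX x y >-> opY x y}.
Hypothesis h_u : {morph h : x / uX x >-> uY x}.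
Hypothesis h_d : {morph h : x / dX x >-> dY x}.

Lemma coloring_map w (o : edge w -> bool) g :
  coloring opX uX dX o g -> coloring opY uY dY o (ffun_map h g).
Proof.
move=> /andP[/forallP arcs /forallP crossings]; apply/andP; split;
  apply/forallP => e1; apply/forallP => e2.
- have /andP[/andP[same lcusp] rcusp] := forallP (arcs e1) e2.
  rewrite !ffunE; apply/andP; split; [apply/andP; split|]; apply/implyP => cond.
  + by rewrite (eqP (implyP same cond)).
  + by move: (implyP lcusp cond); case: (o e1) => /eqP ->; rewrite ?h_u ?h_d.
  + by move: (implyP rcusp cond); case: (o e1) => /eqP ->; rewrite ?h_u ?h_d.
- apply/forallP => e3; apply/implyP => cond; rewrite !ffunE.
  move: (implyP (forallP (forallP (crossings e1) e2) e3) cond).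
  by case: (o e3) => /eqP ->; rewrite h_op.
Qed.

End ColoringMorphism.

Theorem corollary3p12 (X : finType) (op : X -> X -> X) (u d : X -> X) (c : nat)
  (HX : is_GLrack op u d) (Hblock : block_GLrack_of_size op c)
  (w : seq event) (Hw : is_knot_front w)
  (o : edge w -> bool) (Ho : orientation o) :
  (c %| Col op u d o)%N.
Proof.
have /card_gt0P[e0 _] : 0 < #|{: edge w}| by case/andP: Hw => /andP[].
have [rackX _ _ _] := HX.
have injF : injective (@ffun_map (edge w) _ _ (diag op)).
  exact: ffun_map_inj (diag_inj HX).
apply: (uniform_order_dvdn_card injF).
- apply: (fclosed_homo injF (A := [set f | coloring op u d o f])) => g.
  rewrite !inE; apply: coloring_map.
  + exact: diag_op rackX.
  + exact: diag_u HX.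
  + exact: diag_d HX.
- move=> g _; exact (order_ffun_map (diag_inj HX) e0 Hblock g).
Qed.
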